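(* Assume $r:\mathbb{R}\to\mathbb{R}$ is an integrable function with $|r(a)|\le r_{\max}$ for all $a$. For every $\alpha>2r_{\max}$, the function $J(\pi_{\mu,\sigma})=\mathbb{E}_{a\sim\mathcal N(\mu,\sigma^2)}\big[r(a)-\alpha\log\mathcal N(a;\mu,\sigma^2)\big]$ of $(\mu,\sigma)\in\mathbb{R}\times(0,\infty)$ has no stationary point.
   Context: $\mathcal N(a;\mu,\sigma^2)$ denotes the Gaussian density with mean $\mu$ and standard deviation $\sigma>0$. This is the single-state (bandit) entropy-regularized objective with action space $\mathbb{R}$ and Gaussian policy $\pi_{\mu,\sigma}=\mathcal N(\mu,\sigma^2)$. *)

From HB Require Import structures.
From mathcomp Require Import all_boot all_order all_algebra.
From mathcomp Require Import all_classical all_reals all_analysis.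
From mathcomp Require Import normal_distribution.
Set Implicit Arguments. Unset Strict Implicit. Unset Printing Implicit Defensive.
Import Order.TTheory GRing.Theory Num.Theory.
Import numFieldNormedType.Exports.
Local Open Scope classical_set_scope.
Local Open Scope ring_scope.

Definition Jobj {R : realType} (r : R -> R) (alpha mu sigma : R) : R :=
  Rintegral (@lebesgue_measure R) setT
    (fun a => normal_pdf mu sigma a * (r a - alpha * ln (normal_pdf mu sigma a))).

Definition stationary_point {R : realType} (J : R -> R -> R) (mu sigma : R) : Prop :=
  0 < sigma /\
  derivable (fun m => J m sigma) mu 1 /\ derive1 (fun m => J m sigma) mu = 0 /\
  derivable (fun s => J mu s) sigma 1 /\ derive1 (fun s => J mu s) sigma = 0.

From HB Require Import structures.
From mathcomp Require Import all_boot all_order all_algebra.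
From mathcomp Require Import all_classical all_reals all_analysis.
From mathcomp Require Import normal_distribution.
From mathcomp Require Import measurable_realfun ring lra.
Import Order.TTheory GRing.Theory Num.Theory.
Import numFieldNormedType.Exports.
Local Open Scope classical_set_scope.
Local Open Scope ring_scope.

(* Write N_s for the density of N(m, s^2).  Since
   -ln N_s x = ln s + ln (sqrt (2 pi)) + (x - m)^2 / (2 s^2) and the mass of the
   quadratic term is invariant under the affine substitution x = m + s z,
   J(m, s) = E_{N_s}[r] + alpha ln s + const.  For s <= s' the densities satisfy
   (s / s') N_s <= N_s' pointwise; integrated against r + rmax >= 0 this gives
   E_{N_s'}[r] - E_{N_s}[r] >= - 2 rmax (1 - s / s'), while
   ln s' - ln s >= 1 - s / s'.  Hence every right difference quotient of J in s,
   with increment below s, is at least (alpha - 2 rmax) / (2 s) > 0, so the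
   derivative in s cannot vanish. *)

Section gaussian_density.
Context {R : realType}.
Implicit Types m s x : R.

Definition sqrt2pi : R := Num.sqrt (pi *+ 2).

Lemma sqrt2pi_gt0 : 0 < sqrt2pi.
Proof. by rewrite sqrtr_gt0 pmulrn_lgt0 ?pi_gt0. Qed.

Lemma normal_pdf_expR m s x : 0 < s ->
  normal_pdf m s x = (s * sqrt2pi)^-1 * expR (- (x - m) ^+ 2 / (s ^+ 2 *+ 2)).
Proof.
move=> s0; rewrite normal_pdfE ?gt_eqF //; congr (_ * _).
rewrite /normal_peak /sqrt2pi -mulrnAr sqrtrM ?sqr_ge0 //.
by rewrite sqrtr_sqr ger0_norm ?ltW.
Qed.

Lemma ln_normal_pdf m s x : 0 < s ->
  ln (normal_pdf m s x) = - (ln s + ln sqrt2pi) - (x - m) ^+ 2 / (s ^+ 2 *+ 2).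
Proof.
move=> s0; rewrite normal_pdf_expR //.
have s2pi0 : 0 < s * sqrt2pi by rewrite mulr_gt0 ?sqrt2pi_gt0.
rewrite lnM ?posrE ?expR_gt0 ?invr_gt0 // expRK lnV ?posrE //.
by rewrite lnM ?posrE ?sqrt2pi_gt0 // mulNr.
Qed.

Lemma normal_pdf_sigma_le m sg s x : 0 < sg -> sg <= s ->
  sg / s * normal_pdf m sg x <= normal_pdf m s x.
Proof.
move=> sg0 sgs; have s0 : 0 < s by apply: lt_le_trans sgs.
rewrite !normal_pdf_expR // mulrA.
have -> : sg / s * (sg * sqrt2pi)^-1 = (s * sqrt2pi)^-1.
  by field; rewrite !gt_eqF ?sqrt2pi_gt0.
apply: ler_wpM2l; first by rewrite invr_ge0 mulr_ge0 // ltW ?sqrt2pi_gt0.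
rewrite ler_expR !mulNr lerN2 ler_wpM2l ?sqr_ge0 //.
rewrite lef_pV2 ?posrE ?pmulrn_lgt0 ?exprn_gt0 // lerMn2r /=.
by rewrite lerXn2r ?nnegrE ?(ltW sg0) ?(ltW s0).
Qed.

End gaussian_density.

Section gaussian_integrals.
Context {R : realType}.
Notation mu := (@lebesgue_measure R).
Implicit Types m s x : R.

Lemma Rintegral_normal_pdf m s : Rintegral mu setT (normal_pdf m s) = 1.
Proof. by rewrite /Rintegral integral_normal_pdf. Qed.

Lemma integrable_normal_pdfZ m s k :
  mu.-integrable setT (EFin \o (fun x => k * normal_pdf m s x)).
Proof.
by apply: eq_integrable (integrableZl measurableT k (integrable_normal_pdf m s)).
Qed.

Definition normal_quad m s x := normal_pdf m s x * ((x - m) ^+ 2 / (s ^+ 2 *+ 2)).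

Lemma normal_quad_ge0 m s x : 0 <= normal_quad m s x.
Proof.
by rewrite mulr_ge0 ?normal_pdf_ge0 // divr_ge0 ?sqr_ge0 // mulrn_wge0 ?sqr_ge0.
Qed.

Lemma continuous_normal_quad m s : s != 0 -> continuous (normal_quad m s).
Proof.
move=> s0 x; apply: continuousM; first exact: continuous_normal_pdf.
apply: cvgM; last exact: cvg_cst.
apply: (cvg_comp (fun x => x - m) (fun x => x ^+ 2)); last exact: sqr_continuous.
by apply: (@cvgB _ R^o); [exact: cvg_id|exact: cvg_cst].
Qed.

Lemma measurable_normal_quad m s : s != 0 -> measurable_fun setT (normal_quad m s).
Proof. by move=> s0; apply: continuous_measurable_fun; exact: continuous_normal_quad. Qed.

Lemma integral_normal_quad_std m s : 0 < s ->
  (\int[mu]_x (normal_quad m s x)%:E = \int[mu]_x (normal_quad 0 1 x)%:E)%E.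
Proof.
move=> s0; set F := fun z => (z + m / s) * s.
have F'E : F^`()%classic = cst s.
  apply/funext => x; rewrite /F derive1E deriveM // deriveD // !derive_cst.
  by rewrite derive_id scaler0 addr0 add0r scaler1.
rewrite (increasing_ge0_integration_by_substitutionT (F := F)) ?F'E //.
- apply: eq_integral => z _; congr EFin.
  rewrite /F /normal_quad !fctE /= !normal_pdf_expR ?ltr01 //.
  rewrite (_ : (z + m / s) * s - m = z * s); last by field; rewrite gt_eqF.
  rewrite subr0 expr1n /= (_ : - (z * s) ^+ 2 / (s ^+ 2 *+ 2) = - z ^+ 2 / (1 *+ 2)).
    by field; rewrite !gt_eqF ?sqrt2pi_gt0.
  by field; rewrite gt_eqF.
- by move=> x y xy; rewrite /F ltr_pM2r // ltrD2r.
- exact: cst_continuous.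
- exact: is_cvg_cst.
- exact: is_cvg_cst.
- by apply: gt0_cvgMlNy => //; exact: cvg_addrr_Ny.
- by apply: gt0_cvgMly => //; exact: cvg_addrr.
- by apply: continuous_normal_quad; rewrite gt_eqF.
- exact: normal_quad_ge0.
Qed.

Lemma normal_quad_std_le z :
  normal_quad 0 1 z <= 2 * Num.sqrt 2 * normal_pdf 0 (Num.sqrt 2) z.
Proof.
have sqrt2_gt0 : 0 < Num.sqrt 2 :> R by rewrite sqrtr_gt0.
rewrite /normal_quad !normal_pdf_expR ?ltr01 // sqr_sqrtr // !subr0 expr1n.
set y := z ^+ 2 / 4.
have y_ge0 : 0 <= y by rewrite divr_ge0 ?sqr_ge0.
have yexpR_le1 : y * expR (- y) <= 1.
  rewrite expRN ler_pdivrMr ?expR_gt0 // mul1r.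
  by apply: le_trans (expR_ge1Dx y); rewrite lerDr.
have -> : - z ^+ 2 / (1 *+ 2) = - y + - y by rewrite /y; field.
have -> : - z ^+ 2 / (2 *+ 2) = - y by rewrite /y; field.
have -> : z ^+ 2 / (1 *+ 2) = 2 * y by rewrite /y; field.
rewrite expRD; set K := 2 * sqrt2pi^-1 * expR (- y).
have K_ge0 : 0 <= K by rewrite !mulr_ge0 ?expR_ge0 ?invr_ge0 ?ltW ?sqrt2pi_gt0.
have -> : 2 * Num.sqrt 2 * ((Num.sqrt 2 * sqrt2pi)^-1 * expR (- y)) = K.
  by rewrite /K; field; rewrite !gt_eqF ?sqrt2pi_gt0.
have -> : (1 * sqrt2pi)^-1 * (expR (- y) * expR (- y)) * (2 * y) =
  K * (y * expR (- y)) by rewrite /K; field; rewrite gt_eqF ?sqrt2pi_gt0.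
exact: ler_piMr.
Qed.

Lemma integrable_normal_quad m s : 0 < s ->
  mu.-integrable setT (EFin \o normal_quad m s).
Proof.
move=> s0; apply/integrableP; split.
  by apply/measurable_EFinP; apply: measurable_normal_quad; rewrite gt_eqF.
under eq_integral do rewrite /= ger0_norm ?normal_quad_ge0 //.
rewrite integral_normal_quad_std //.
apply: (@le_lt_trans _ _ (\int[mu]_x (2 * Num.sqrt 2 * normal_pdf 0 (Num.sqrt 2) x)%:E)%E).
  apply: ge0_le_integral => //.
  - by move=> x _; rewrite lee_fin normal_quad_ge0.
  - by apply/measurable_EFinP; apply: measurable_normal_quad; rewrite oner_eq0.
  - by apply/measurable_EFinP; apply: measurable_funM => //; exact: measurable_normal_pdf.
  - by move=> x _; rewrite lee_fin normal_quad_std_le.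
under eq_integral do rewrite EFinM.
by rewrite integralZl ?integrable_normal_pdf // integral_normal_pdf mule1 ltry.
Qed.

Lemma Rintegral_normal_quad m s : 0 < s ->
  Rintegral mu setT (normal_quad m s) = Rintegral mu setT (normal_quad 0 1).
Proof. by move=> s0; rewrite /Rintegral integral_normal_quad_std. Qed.

End gaussian_integrals.

Section normal_bounded_mean.
Context {R : realType} {f : R -> R} {M : R}.
Notation mu := (@lebesgue_measure R).
Hypotheses (mf : measurable_fun setT f) (fM : forall x, `|f x| <= M).
Implicit Types m s x : R.

Lemma integrable_normal_pdfM m s :
  mu.-integrable setT (EFin \o (fun x => normal_pdf m s x * f x)).
Proof.
apply: le_integrable (integrable_normal_pdfZ m s M) => //.
  apply/measurable_EFinP; apply: measurable_funM => //; exact: measurable_normal_pdf.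
move=> x _ /=; rewrite lee_fin !normrM (ger0_norm (normal_pdf_ge0 _ _ _)) mulrC.
by rewrite ler_wpM2r ?normal_pdf_ge0 // (le_trans (fM x)) ?ler_norm.
Qed.

Lemma Rintegral_normal_pdfMDr m s c :
  Rintegral mu setT (fun x => normal_pdf m s x * (f x + c)) =
  Rintegral mu setT (fun x => normal_pdf m s x * f x) + c.
Proof.
under eq_Rintegral do rewrite mulrDr [_ * c]mulrC.
rewrite RintegralD ?integrable_normal_pdfM ?integrable_normal_pdfZ //.
by rewrite RintegralZl ?integrable_normal_pdf // Rintegral_normal_pdf mulr1.
Qed.

Lemma integrable_normal_pdfMD m s c :
  mu.-integrable setT (EFin \o (fun x => normal_pdf m s x * (f x + c))).
Proof.
apply: eq_integrable (integrableD measurableT (integrable_normal_pdfM m s)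
  (integrable_normal_pdfZ m s c)) => // x _.
by rewrite /= mulrDr [c * _]mulrC.
Qed.

Lemma Rintegral_normal_pdfM_le m s :
  Rintegral mu setT (fun x => normal_pdf m s x * f x) <= M.
Proof.
apply: (@le_trans _ _ (Rintegral mu setT (fun x => M * normal_pdf m s x))).
  apply: le_Rintegral => //;
    [exact: integrable_normal_pdfM | exact: integrable_normal_pdfZ | move=> x _].
  by rewrite mulrC ler_wpM2r ?normal_pdf_ge0 // (le_trans (ler_norm _) (fM x)).
by rewrite RintegralZl ?integrable_normal_pdf // Rintegral_normal_pdf mulr1.
Qed.

Lemma Rintegral_normal_pdfM_sigma_ge m sg s : 0 < sg -> sg <= s ->
  (sg / s - 1) * (2 * M) <=
  Rintegral mu setT (fun x => normal_pdf m s x * f x) -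
  Rintegral mu setT (fun x => normal_pdf m sg x * f x).
Proof.
move=> sg0 sgs; have s0 : 0 < s by apply: lt_le_trans sgs.
have fM_ge0 x : 0 <= f x + M.
  by rewrite -lerBlDr sub0r; move: (fM x); rewrite ler_norml => /andP[].
have shift_le : sg / s * (Rintegral mu setT (fun x => normal_pdf m sg x * f x) + M) <=
    Rintegral mu setT (fun x => normal_pdf m s x * f x) + M.
  rewrite -!Rintegral_normal_pdfMDr -RintegralZl ?integrable_normal_pdfMD //.
  apply: le_Rintegral => //;
    [exact: integrableZl (integrable_normal_pdfMD _ _ _) |
     exact: integrable_normal_pdfMD | move=> x _].
  by rewrite mulrA ler_wpM2r ?normal_pdf_sigma_le.
have : 0 <= (1 - sg / s) *
    (M - Rintegral mu setT (fun x => normal_pdf m sg x * f x)).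
  by rewrite mulr_ge0 ?subr_ge0 ?Rintegral_normal_pdfM_le // ler_pdivrMr // mul1r.
nra.
Qed.

End normal_bounded_mean.

Section entropy_regularized_objective.
Context {R : realType} {r : R -> R} {rmax : R}.
Notation mu := (@lebesgue_measure R).
Hypotheses (mr : measurable_fun setT r) (r_bound : forall a, `|r a| <= rmax).
Variable alpha : R.
Implicit Types m s : R.

Lemma Jobj_entropy_split m s : 0 < s ->
  Jobj r alpha m s = Rintegral mu setT (fun x => normal_pdf m s x * r x) +
    alpha * (ln s + ln sqrt2pi + Rintegral mu setT (normal_quad 0 1)).
Proof.
move=> s0; rewrite /Jobj.
rewrite (@eq_Rintegral _ _ _ mu setT (fun x => (normal_pdf m s x * r x +
    alpha * (ln s + ln sqrt2pi) * normal_pdf m s x) + alpha * normal_quad m s x));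
  last by move=> x _; rewrite ln_normal_pdf // /normal_quad; ring.
have int_Nr := integrable_normal_pdfM mr r_bound m s.
have int_N := integrable_normal_pdfZ m s (alpha * (ln s + ln sqrt2pi)).
have int_q : mu.-integrable setT (EFin \o (fun x => alpha * normal_quad m s x)).
  by apply: eq_integrable measurableT _ _ _
    (integrableZl measurableT alpha (integrable_normal_quad m s s0)).
have int_Nr_N : mu.-integrable setT (EFin \o (fun x => normal_pdf m s x * r x +
    alpha * (ln s + ln sqrt2pi) * normal_pdf m s x)).
  by apply: eq_integrable measurableT _ _ _ (integrableD measurableT int_Nr int_N).
rewrite !RintegralD // !RintegralZl ?integrable_normal_pdf ?integrable_normal_quad //.
by rewrite Rintegral_normal_pdf Rintegral_normal_quad //; ring.
Qed.

Lemma Jobj_sigma_increment m sg s : 0 <= alpha -> 0 < sg -> sg <= s ->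
  (alpha - 2 * rmax) * (1 - sg / s) <= Jobj r alpha m s - Jobj r alpha m sg.
Proof.
move=> alpha_ge0 sg0 sgs; have s0 : 0 < s by apply: lt_le_trans sgs.
rewrite !Jobj_entropy_split //.
have mean_ge := Rintegral_normal_pdfM_sigma_ge mr r_bound m sg s sg0 sgs.
have ln_ge : alpha * (1 - sg / s) <= alpha * (ln s - ln sg).
  apply: ler_wpM2l => //.
  have := @le_ln1Dx R (sg / s - 1); rewrite addrCA subrr addr0 ln_div ?posrE //.
  by move=> /(_ _)/wrap[]; [rewrite ltrBrDl subrr divr_gt0 | lra].
lra.
Qed.

End entropy_regularized_objective.

Lemma derive1_ge_right_quotients {R : realType} (f : R -> R) x c d : 0 < d ->
  derivable f x 1 -> (forall h, 0 < h < d -> c <= (f (x + h) - f x) / h) ->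
  c <= derive1 f x.
Proof.
move=> d0 df quotient_ge; rewrite derive1E /derive.
set g := fun h : R => _.
have g_right : g @ 0^'+ --> lim (g @ 0^') by apply: cvg_dnbhs_at_right; exact: df.
apply: (cvgr_to_ge g_right); near=> h.
have -> : g h = (f (x + h) - f x) / h by rewrite /g /= [h%:A]mulr1 (addrC h x) mulrC.
apply: quotient_ge; apply/andP; split; near: h;
  [exact: nbhs_right_gt | exact: nbhs_right_lt].
Unshelve. all: end_near. Qed.

Theorem proposition3p3 (R : realType) (r : R -> R) (rmax : R) :
  (@lebesgue_measure R).-integrable setT (EFin \o r) ->
  (forall a, `|r a| <= rmax) ->
  forall alpha : R, 2 * rmax < alpha ->
  ~ (exists mu sigma : R, stationary_point (Jobj r alpha) mu sigma).
Proof.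
move=> int_r r_bound alpha rmax_lt [m [sg [sg0 [_ [_ [dJ dJ0]]]]]].
have mr : measurable_fun setT r by apply/measurable_EFinP; exact: measurable_int int_r.
have rmax_ge0 : 0 <= rmax := le_trans (normr_ge0 _) (r_bound 0).
have alpha_ge0 : 0 <= alpha by lra.
have c_gt0 : 0 < (alpha - 2 * rmax) / (2 * sg) by rewrite divr_gt0 ?subr_gt0 ?mulr_gt0.
suff : (alpha - 2 * rmax) / (2 * sg) <= derive1 (fun s => Jobj r alpha m s) sg.
  by rewrite dJ0 leNgt c_gt0.
apply: (derive1_ge_right_quotients _ _ _ _ sg0 dJ) => h /andP[h0 h_lt].
have sg_le : sg <= sg + h by rewrite lerDl ltW.
rewrite ler_pdivlMr //.
apply: le_trans (Jobj_sigma_increment mr r_bound alpha m _ _ alpha_ge0 sg0 sg_le).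
have -> : 1 - sg / (sg + h) = h / (sg + h) by field; rewrite gt_eqF ?addr_gt0.
rewrite mulrAC mulrA; apply: ler_wpM2l; first by rewrite mulr_ge0 ?subr_ge0 ?ltW.
by rewrite lef_pV2 ?posrE ?mulr_gt0 ?addr_gt0 //; lra.
Qed.
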